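(* Let $\mathcal{P}$ be a profile of unrooted phylogenetic trees whose display graph $G(\mathcal{P})$ is connected. Let $F$ be a nice minimal cut of $G(\mathcal{P})$ and let $G_1,G_2$ be the two connected components of $G(\mathcal{P})-F$. Then $\mathcal{L}(G_1)|\mathcal{L}(G_2)$ is a split of $\mathcal{L}(\mathcal{P})$, where $\mathcal{L}(G_i)$ denotes the set of leaves (elements of $\mathcal{L}(\mathcal{P})$) in $G_i$.
   Context: A phylogenetic tree $T$ is an unrooted tree whose leaves are bijectively labeled by $\mathcal{L}(T)$ (leaves identified with labels; internal vertices have degree at least three). A profile $\mathcal{P}=\{T_1,\dots,T_k\}$ is a finite collection of phylogenetic trees, $\mathcal{L}(\mathcal{P})=\bigcup_i\mathcal{L}(T_i)$; internal vertices of distinct trees are disjoint, while leaves with the same label are the same vertex. The display graph $G(\mathcal{P})$ has vertex set $\bigcup_i V(T_i)$ and edge set $\bigcup_i E(T_i)$. For a vertex $u$ of an input tree, $\mathrm{Inc}(u)$ is the set of edges of $G(\mathcal{P})$ incident with $u$. A split of a set $L$ is a bipartition of $L$ into two nonempty sets. A cut of a connected graph $G$ is $F\subseteq E(G)$ with $G-F$ disconnected; minimal if no proper subset is a cut (then $G-F$ has exactly two components). A cut $F$ of $G(\mathcal{P})$ is legal if for every $T\in\mathcal{P}$ there is $u\in V(T)$ with $F\cap E(T)\subseteq\mathrm{Inc}(u)$; nice if legal and every component of $G(\mathcal{P})-F$ contains at least one edge. *)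

(* Graphs on a finite vertex type V; an edge is a 2-element
   subset of V, an edge set is a {set {set V}}. *)
From mathcomp Require Import all_boot.
Set Implicit Arguments. Unset Strict Implicit. Unset Printing Implicit Defensive.

Section Graphs.
Variable V : finType.

Definition adj (E : {set {set V}}) : rel V :=
  fun x y => (x != y) && ([set x; y] \in E).

Definition grel (W : {set V}) (E : {set {set V}}) : rel V :=
  fun x y => [&& x \in W, y \in W & adj E x y].

Definition is_graph (W : {set V}) (E : {set {set V}}) : Prop :=
  forall e, e \in E -> exists x y, [/\ x \in W, y \in W, x != y & e = [set x; y]].

Definition connected (W : {set V}) (E : {set {set V}}) : Prop :=
  W != set0 /\ forall x y, x \in W -> y \in W -> connect (grel W E) x y.

Definition acyclic (W : {set V}) (E : {set {set V}}) : Prop :=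
  forall s : seq V, uniq s -> 2 < size s -> all (mem W) s -> ~~ cycle (grel W E) s.

Definition is_tree (W : {set V}) (E : {set {set V}}) : Prop :=
  [/\ is_graph W E, connected W E & acyclic W E].

Definition deg (E : {set {set V}}) (v : V) : nat := #|[set e in E | v \in e]|.

Definition leaves (W : {set V}) (E : {set {set V}}) : {set V} :=
  [set v in W | deg E v <= 1].

Definition phylo_tree (W : {set V}) (E : {set {set V}}) : Prop :=
  is_tree W E /\ forall v, v \in W -> v \notin leaves W E -> 2 < deg E v.

(* A profile of k phylogenetic trees T_i = (VT i, ET i); internal vertices of
   distinct trees are disjoint, and shared vertices are leaves (labels) of both. *)
Definition profile (k : nat) (VT : 'I_k -> {set V}) (ET : 'I_k -> {set {set V}}) : Prop :=
  (forall i, phylo_tree (VT i) (ET i)) /\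
  (forall i j v, i != j -> v \in VT i -> v \in VT j ->
      (v \in leaves (VT i) (ET i)) && (v \in leaves (VT j) (ET j))).

Definition profile_leaves k (VT : 'I_k -> {set V}) ET : {set V} :=
  \bigcup_(i < k) leaves (VT i) (ET i).

Definition dV k (VT : 'I_k -> {set V}) : {set V} := \bigcup_(i < k) VT i.
Definition dE k (ET : 'I_k -> {set {set V}}) : {set {set V}} := \bigcup_(i < k) ET i.

Definition is_cut (W : {set V}) (E F : {set {set V}}) : Prop :=
  F \subset E /\ ~ connected W (E :\: F).

Definition minimal_cut W E F : Prop :=
  is_cut W E F /\ forall F' : {set {set V}}, F' \proper F -> ~ is_cut W E F'.

Definition Inc k (ET : 'I_k -> {set {set V}}) (u : V) : {set {set V}} :=
  [set e in dE ET | u \in e].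

Definition legal_cut k (VT : 'I_k -> {set V}) ET F : Prop :=
  is_cut (dV VT) (dE ET) F /\
  forall i, exists2 u, u \in VT i & F :&: ET i \subset Inc ET u.

Definition is_component (W : {set V}) (E : {set {set V}}) (C : {set V}) : Prop :=
  exists2 x, x \in W & C = [set y in W | connect (grel W E) x y].

Definition nice_cut k (VT : 'I_k -> {set V}) ET F : Prop :=
  legal_cut VT ET F /\
  forall C, is_component (dV VT) (dE ET :\: F) C ->
    exists2 e, e \in dE ET :\: F & e \subset C.

Definition is_split (L A B : {set V}) : Prop :=
  [/\ A != set0, B != set0, A :&: B = set0 & A :|: B = L].

End Graphs.

From Pilot Require Import Defs.
From mathcomp Require Import all_boot.
Set Implicit Arguments. Unset Strict Implicit. Unset Printing Implicit Defensive.

(* Every component C of G(P) - F contains an edge xy of some tree T, and since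
   the cut is legal the edges of F in T all pass through one vertex u. In the
   forest T - F, the two ends of a longest path through the component of x
   have at most one neighbour each; one of them, b, differs from u, so in T the
   vertex b has degree at most 2: one edge of T - F and possibly the F-edge bu.
   As internal vertices of a phylogenetic tree have degree at least 3, b is a
   leaf, and it lies in C. Hence both sides of the bipartition are nonempty.
   They are disjoint because components are, and they cover the leaves because
   minimality forces G(P) - F to have only two components: putting back one
   edge ab of F reconnects the graph, so every vertex is reached from a or b. *)

Section Forest.
Variables (T : finType) (r : rel T).
Hypotheses (r_sym : symmetric r) (r_irr : irreflexive r).
Hypothesis r_acyclic : forall s, uniq s -> 2 < size s -> ~~ cycle r s.

Definition component_path x (l : seq T) :=
  [&& uniq l, sorted r l & connect r x (head x l)].

Definition at_most_one_nbr b := forall z1 z2, r b z1 -> r b z2 -> z1 = z2.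

Lemma component_path_rev x l : component_path x l -> component_path x (rev l).
Proof.
case: l => [|a s] // /and3P[uniq_l path_l conn_xa].
rewrite /component_path rev_uniq uniq_l rev_sorted.
have -> : sorted (fun z => r^~ z) (a :: s).
  by apply: sub_sorted path_l => u v; rewrite r_sym.
have -> : head x (rev (a :: s)) = last a s by rewrite lastI rev_rcons.
apply: connect_trans conn_xa _.
exact: (path_connect path_l) (mem_last a s).
Qed.

Lemma longest_component_path x y : r x y ->
  exists l, [/\ component_path x l, 1 < size l &
    forall l', component_path x l' -> size l' <= size l].
Proof.
move=> rxy.
pose P n := [exists t : n.-tuple T, component_path x t].
have P2 : P 2.
  apply/existsP; exists [tuple x; y].
  rewrite /component_path /= mem_seq1 rxy connect0 !andbT.
  by apply: contraTneq rxy => ->; rewrite r_irr.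
have P_bounded n : P n -> n <= #|T|.
  move=> /existsP[t /and3P[uniq_t _ _]].
  by rewrite -(size_tuple t) -(card_uniqP uniq_t) max_card.
have [m /existsP[t path_t] max_m] := ex_maxnP (ex_intro _ 2 P2) P_bounded.
exists t; split; rewrite ?size_tuple //; first exact: max_m.
by move=> l' path_l'; apply: max_m; apply/existsP; exists (in_tuple l').
Qed.

(* A neighbour z of the last vertex other than its predecessor would close a
   cycle if it lay on the path, and would extend the path otherwise. *)
Lemma longest_path_last_nbr x l : component_path x l -> 0 < size l ->
    (forall l', component_path x l' -> size l' <= size l) ->
  forall z, r (last x l) z -> exists p, l = rcons (rcons p z) (last x l).
Proof.
case: l => [|a s] // /and3P[uniq_l path_l conn_xa] _ max_l z rz.
have z_in : z \in a :: s.
  apply: contraT => z_out.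
  have : component_path x (rcons (a :: s) z).
    rewrite /component_path rcons_uniq z_out uniq_l /= conn_xa andbT.
    by move: path_l; rewrite /= rcons_path rz andbT.
  by move/max_l; rewrite size_rcons ltnn.
case/splitPr: z_in uniq_l path_l rz => p1 p2 uniq_l path_l.
rewrite last_cat => rz.
have uniq_zp2 : uniq (z :: p2) by move: uniq_l; rewrite cat_uniq => /and3P[].
have cycle_zp2 : cycle r (z :: p2).
  by move: path_l; rewrite sorted_cat_cons /= rcons_path rz => /andP[_ ->].
have : size (z :: p2) <= 2.
  by rewrite leqNgt; apply: contraL cycle_zp2; apply: r_acyclic.
case: p2 {uniq_l path_l} uniq_zp2 rz cycle_zp2 => [|w [|//]] _ rz _ _.
  by rewrite r_irr in rz.
by exists p1; rewrite -!cats1 -catA.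
Qed.

Lemma longest_path_last_at_most_one_nbr x l : component_path x l -> 0 < size l ->
  (forall l', component_path x l' -> size l' <= size l) -> at_most_one_nbr (last x l).
Proof.
move=> path_l l_gt0 max_l z1 z2 rz1 rz2.
have [p1 def1] := longest_path_last_nbr path_l l_gt0 max_l rz1.
have [p2 def2] := longest_path_last_nbr path_l l_gt0 max_l rz2.
by move: def2; rewrite def1 => /rcons_inj[/rcons_inj[]].
Qed.

Lemma forest_leaf x y u : r x y ->
  exists b, [/\ connect r x b, b != u & at_most_one_nbr b].
Proof.
move=> rxy.
have [l [path_l size_l max_l]] := longest_component_path rxy.
case: l path_l size_l max_l => [|a [|w s]] // path_l _ max_l.
have [uniq_l path_as conn_xa] := and3P path_l.
have max_rev l' : component_path x l' -> size l' <= size (rev [:: a, w & s]).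
  by move=> /max_l; rewrite size_rev.
have nbr_last := longest_path_last_at_most_one_nbr path_l isT max_l.
have rev_gt0 : 0 < size (rev [:: a, w & s]) by rewrite size_rev.
have := longest_path_last_at_most_one_nbr (component_path_rev path_l) rev_gt0 max_rev.
rewrite rev_cons last_rcons => nbr_a.
have conn_x_last : connect r x (last a (w :: s)).
  exact: connect_trans conn_xa (path_connect path_as (mem_last _ _)).
have [last_u|last_neq] := eqVneq (last a (w :: s)) u; last by exists (last a (w :: s)).
exists a; split=> //; rewrite -last_u.
by apply: contraTneq uniq_l => ->; rewrite /= mem_last.
Qed.

End Forest.

Section Graphs.
Variables (V : finType) (W : {set V}) (E : {set {set V}}).
Local Notation R := (Defs.grel W E).

Lemma grel_sym : symmetric R.
Proof.
move=> x y; rewrite /Defs.grel /adj eq_sym setUC.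
by rewrite andbCA; congr andb; rewrite andbCA.
Qed.

Lemma grel_irr : irreflexive R.
Proof. by move=> x; rewrite /Defs.grel /adj eqxx /= !andbF. Qed.

Lemma path_grel_all x p : path R x p -> all (mem W) p.
Proof.
elim: p x => [|y p IH] x //= /andP[/and3P[_ y_in _] path_p].
by rewrite y_in (IH y path_p).
Qed.

Lemma connect_grel_mem x y : x \in W -> connect R x y -> y \in W.
Proof.
move=> x_in /connectP[p /path_grel_all all_p ->].
by have := mem_last x p; rewrite inE => /predU1P[-> //|]; apply: (allP all_p).
Qed.

Lemma acyclic_grel : acyclic W E -> forall s, uniq s -> 2 < size s -> ~~ cycle R s.
Proof.
move=> acyc [|z s] // uniq_s size_s; apply/negP => cycle_s.
have all_s : all (mem W) (z :: s).
  by move: cycle_s => /= /path_grel_all; rewrite all_rcons.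
by have := acyc _ uniq_s size_s all_s; rewrite cycle_s.
Qed.

Definition component_of x := [set y in W | connect R x y].

Lemma mem_component_of x : x \in W -> x \in component_of x.
Proof. by move=> x_in; rewrite inE x_in connect0. Qed.

Lemma component_of_eq x y : connect R x y -> component_of x = component_of y.
Proof.
have R_sym : connect_sym R by apply: sym_connect_sym; apply: grel_sym.
move=> conn_xy; apply/setP => v; rewrite !inE; congr andb.
by apply/idP/idP; apply: connect_trans; rewrite // R_sym.
Qed.

Lemma component_of_mem x y : y \in component_of x -> component_of x = component_of y.
Proof. by rewrite inE => /andP[_ /component_of_eq]. Qed.

Lemma component_of_connect x y z :
  y \in component_of x -> connect R y z -> z \in component_of x.
Proof.
move=> y_in conn_yz; rewrite (component_of_mem y_in) inE conn_yz andbT.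
by apply: connect_grel_mem conn_yz; move: y_in; rewrite inE => /andP[].
Qed.

Lemma component_of_disjoint x y :
  component_of x != component_of y -> component_of x :&: component_of y = set0.
Proof.
move=> neq_xy; apply/setP => v; rewrite inE in_set0; apply/negP => /andP[vx vy].
by move: neq_xy; rewrite (component_of_mem vx) (component_of_mem vy) eqxx.
Qed.

Lemma two_components_cover a b x1 x2 :
    (forall v, v \in W -> connect R a v || connect R b v) ->
    x1 \in W -> x2 \in W -> component_of x1 != component_of x2 ->
  forall v, v \in W -> v \in component_of x1 :|: component_of x2.
Proof.
move=> reach x1_in x2_in neq12 v v_in.
have comp_ab z :
    z \in W -> component_of z = component_of a \/ component_of z = component_of b.
  by move=> /reach /orP[] /component_of_eq ->; [left|right].
rewrite inE; move: neq12 (mem_component_of v_in).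
have [->|->] := comp_ab _ x1_in; have [->|->] := comp_ab _ x2_in;
  by have [->|->] := comp_ab _ v_in; rewrite ?eqxx // => _ ->; rewrite ?orbT.
Qed.

End Graphs.

Lemma grel_sub (V : finType) (W W' : {set V}) (E E' : {set {set V}}) :
  W \subset W' -> E \subset E' -> subrel (Defs.grel W E) (Defs.grel W' E').
Proof.
move=> /subsetP sWW' /subsetP sEE' x y /and3P[x_in y_in /andP[xy e_in]].
by rewrite /Defs.grel /adj sWW' ?sWW' ?xy ?sEE'.
Qed.

Lemma connect_grel_sub (V : finType) (W W' : {set V}) (E E' : {set {set V}}) :
  W \subset W' -> E \subset E' ->
  subrel (connect (Defs.grel W E)) (connect (Defs.grel W' E')).
Proof.
by move=> sWW' sEE'; apply: connect_sub => x y /(grel_sub sWW' sEE') /connect1.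
Qed.

Lemma acyclicS (V : finType) (W : {set V}) (E E' : {set {set V}}) :
  E' \subset E -> acyclic W E -> acyclic W E'.
Proof.
move=> sE'E acyc s uniq_s size_s all_s; apply: contraNN (acyc s uniq_s size_s all_s).
exact/sub_cycle/grel_sub.
Qed.

Section CutTree.
Variables (V : finType) (W : {set V}) (E F : {set {set V}}) (u : V).
Hypothesis F_through_u : forall e, e \in E -> e \in F -> u \in e.
Local Notation R := (Defs.grel W (E :\: F)).

Lemma deg_le2_of_at_most_one_nbr b : is_graph W E -> b \in W -> b != u ->
  at_most_one_nbr R b -> deg E b <= 2.
Proof.
move=> graph_E b_in b_neq_u nbr_b.
pose z0 := odflt b [pick z | R b z].
apply: leq_trans (_ : #|[set [set b; u]; [set b; z0]]| <= 2); last first.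
  by rewrite cards2; case: (_ != _).
apply: subset_leq_card; apply/subsetP => e; rewrite inE => /andP[e_in b_e].
have [w w_in /andP[w_neq_b /eqP def_e]] :
    exists2 w, w \in W & (w != b) && (e == [set b; w]).
  move: b_e; have [p [q [p_in q_in pq ->]]] := graph_E e e_in.
  rewrite !inE => /predU1P[->|/eqP->].
    by exists q; rewrite // eq_sym pq eqxx.
  by exists p; rewrite // pq setUC eqxx.
have [e_F|e_nF] := boolP (e \in F).
  have := F_through_u e_in e_F; rewrite def_e !inE => /predU1P[u_b|/eqP<-].
    by rewrite u_b eqxx in b_neq_u.
  by rewrite eqxx.
have Rbw : R b w by rewrite /Defs.grel b_in w_in /adj eq_sym w_neq_b -def_e inE e_nF.
rewrite /z0; case: pickP => [z Rbz|no_nbr]; last by rewrite no_nbr in Rbw.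
by rewrite /= def_e (nbr_b _ _ Rbw Rbz) set22.
Qed.

Lemma phylo_tree_cut_leaf x y : phylo_tree W E -> R x y ->
  exists2 b, b \in leaves W E & connect R x b.
Proof.
case=> [[graph_E _ acyc_E] internal_deg] Rxy.
have acyc_R := acyclic_grel (acyclicS (subsetDl E F) acyc_E).
have [b [conn_xb b_neq_u nbr_b]] :=
  forest_leaf (@grel_sym _ _ _) (@grel_irr _ _ _) acyc_R u Rxy.
have b_in : b \in W by apply: connect_grel_mem conn_xb; case/and3P: Rxy.
exists b => //; apply: contraT => b_internal.
have := internal_deg b b_in b_internal.
by rewrite ltnNge deg_le2_of_at_most_one_nbr.
Qed.

End CutTree.

Lemma connect_grel_setU1 (V : finType) (W : {set V}) (E : {set {set V}}) a b y :
  connect (Defs.grel W ([set a; b] |: E)) a y ->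
  connect (Defs.grel W E) a y || connect (Defs.grel W E) b y.
Proof.
set R := Defs.grel W E; set S := [pred z | connect R a z || connect R b z].
have S_closed : closed (Defs.grel W ([set a; b] |: E)) S.
  apply: intro_closed; first by apply: sym_connect_sym; apply: grel_sym.
  move=> z w /and3P[z_in w_in /andP[zw]]; rewrite in_setU1 => /predU1P[ab_zw|zw_E].
    have : w \in [set a; b] by rewrite -ab_zw set22.
    by rewrite !inE => /predU1P[->|/eqP->] _; rewrite connect0 ?orbT.
  have Rzw : R z w by rewrite /R /Defs.grel z_in w_in /adj zw.
  by rewrite !inE => /orP[] conn; rewrite (connect_trans conn (connect1 Rzw)) ?orbT.
by move=> /(closed_connect S_closed); rewrite !inE connect0 => <-.
Qed.

Lemma minimal_cut_two_sources (V : finType) (W : {set V}) (E F : {set {set V}}) :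
  is_graph W E -> connected W E -> minimal_cut W E F ->
  exists a b, forall v, v \in W ->
    connect (Defs.grel W (E :\: F)) a v || connect (Defs.grel W (E :\: F)) b v.
Proof.
move=> graph_E conn_E [[sFE not_conn] minF].
have [f f_in] : exists f, f \in F.
  by apply/set0Pn; apply: contraPneq not_conn => ->; rewrite setD0.
have f_E : f \in E := subsetP sFE f f_in.
have [a [b [a_in _ _ def_f]]] := graph_E f f_E.
exists a, b => v v_in; apply: connect_grel_setU1.
have conn_av : connect (Defs.grel W (E :\: (F :\ f))) a v.
  apply/negPn/negP => not_av; apply: (minF (F :\ f) (properD1 f_in)); split.
    exact: subset_trans (subsetDl F [set f]) sFE.
  by case=> _ /(_ a v a_in v_in); apply/negP.
apply: connect_grel_sub conn_av => //; apply/subsetP => e; rewrite -def_f !inE.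
by case: (e == f).
Qed.

Section Profile.
Variables (V : finType) (k : nat) (VT : 'I_k -> {set V}) (ET : 'I_k -> {set {set V}}).
Hypothesis phylo_VT : forall i, phylo_tree (VT i) (ET i).

Lemma display_is_graph : is_graph (dV VT) (dE ET).
Proof.
move=> e /bigcupP[i _ e_i]; have [[graph_i _ _] _] := phylo_VT i.
have [x [y [x_in y_in xy ->]]] := graph_i e e_i.
by exists x, y; split; rewrite // /dV; apply/bigcupP; exists i.
Qed.

Lemma profile_leaves_sub : profile_leaves VT ET \subset dV VT.
Proof.
apply/bigcupsP => i _; apply/subsetP => v; rewrite inE => /andP[v_in _].
by apply/bigcupP; exists i.
Qed.

Lemma nice_cut_component_leaf F C :
  nice_cut VT ET F -> is_component (dV VT) (dE ET :\: F) C ->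
  exists2 v, v \in profile_leaves VT ET & v \in C.
Proof.
move=> [[_ legal] nice] compC.
have [e /setDP[/bigcupP[i _ e_i] e_nF] sub_eC] := nice C compC.
have [[graph_i _ _] _] := phylo_VT i.
have [x [y [x_in y_in xy def_e]]] := graph_i e e_i.
have [u _ sub_Fu] := legal i.
have F_through_u e' : e' \in ET i -> e' \in F -> u \in e'.
  move=> e'_i e'_F; have := subsetP sub_Fu e'.
  by rewrite !inE e'_i e'_F => /(_ isT)/andP[].
have Rxy : Defs.grel (VT i) (ET i :\: F) x y.
  by rewrite /Defs.grel x_in y_in /adj xy -def_e inE e_nF.
have [b leaf_b conn_xb] := phylo_tree_cut_leaf F_through_u (phylo_VT i) Rxy.
exists b; first by apply/bigcupP; exists i.
have x_C : x \in C by apply: (subsetP sub_eC); rewrite def_e set21.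
case: compC x_C => x0 _ -> x_C; apply: component_of_connect x_C _.
by apply: connect_grel_sub conn_xb; [apply: bigcup_sup | apply/setSD/bigcup_sup].
Qed.

End Profile.

Theorem lemma10 (V : finType) (k : nat) (VT : 'I_k -> {set V})
    (ET : 'I_k -> {set {set V}}) (F : {set {set V}}) (C1 C2 : {set V}) :
  profile VT ET ->
  connected (dV VT) (dE ET) ->
  nice_cut VT ET F ->
  minimal_cut (dV VT) (dE ET) F ->
  is_component (dV VT) (dE ET :\: F) C1 ->
  is_component (dV VT) (dE ET :\: F) C2 ->
  C1 != C2 ->
  is_split (profile_leaves VT ET) (profile_leaves VT ET :&: C1)
           (profile_leaves VT ET :&: C2).
Proof.
move=> [phylo_VT _] conn_G nice min_F comp1 comp2 neq12.
have [v1 v1_L v1_C1] := nice_cut_component_leaf phylo_VT nice comp1.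
have [v2 v2_L v2_C2] := nice_cut_component_leaf phylo_VT nice comp2.
have [a [b reach]] := minimal_cut_two_sources (display_is_graph phylo_VT) conn_G min_F.
case: comp1 comp2 neq12 v1_C1 v2_C2 => x1 x1_in -> [x2 x2_in ->] neq12 v1_C1 v2_C2.
split.
- by apply/set0Pn; exists v1; rewrite inE v1_L.
- by apply/set0Pn; exists v2; rewrite inE v2_L.
- by rewrite setIACA setIid component_of_disjoint ?setI0.
- rewrite -setIUr; apply/setIidPl/subsetP => v /(subsetP (profile_leaves_sub VT ET)).
  exact: two_components_cover reach x1_in x2_in neq12 v.
Qed.
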